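(* Let $p$ be a prime, $\mathcal{O}$ an order in $B_p$, and let $\beta_1,\beta_2$ be linearly independent elements of $\mathcal{O}^T$. Suppose $N(\beta_1)\le p$ and that $\beta_2$ has minimal norm among the elements of $\beta_2+\mathbb{Z}\beta_1$. Then $|\frac12\mathrm{Tr}(\beta_1\overline{\beta_2})|$ equals the least non-negative integer $t$ with $t^2\equiv N(\beta_1)N(\beta_2)\pmod p$.
   Context: $B_p$ is the quaternion algebra over $\mathbb{Q}$ ramified exactly at $p$ and $\infty$, with canonical involution $\overline{x}$, reduced norm $N(x)=x\overline{x}$ and reduced trace $\mathrm{Tr}(x)=x+\overline{x}$. The Gross lattice of an order $\mathcal{O}$ is $\mathcal{O}^T=\{2x-\mathrm{Tr}(x):x\in\mathcal{O}\}$. *)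

From HB Require Import structures.
From mathcomp Require Import all_boot all_order all_algebra.
Set Implicit Arguments. Unset Strict Implicit. Unset Printing Implicit Defensive.
Import Order.TTheory GRing.Theory Num.Theory.
Local Open Scope ring_scope.

(* Elements x0 + x1 i + x2 j + x3 k of the quaternion algebra (a,b)_Q,
   i^2 = a, j^2 = b, k = ij = -ji. *)
Record quat := Quat { q0 : rat; q1 : rat; q2 : rat; q3 : rat }.

Definition qzero := Quat 0 0 0 0.
Definition qone := Quat 1 0 0 0.
Definition qadd (x y : quat) :=
  Quat (q0 x + q0 y) (q1 x + q1 y) (q2 x + q2 y) (q3 x + q3 y).
Definition qscale (c : rat) (x : quat) :=
  Quat (c * q0 x) (c * q1 x) (c * q2 x) (c * q3 x).
Definition qsub (x y : quat) := qadd x (qscale (-1) y).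
Definition qrat (c : rat) := Quat c 0 0 0.
Definition qconj (x : quat) := Quat (q0 x) (- q1 x) (- q2 x) (- q3 x).

Definition qtrace (x : quat) : rat := q0 (qadd x (qconj x)).

Definition qlincomb (c : 'I_4 -> rat) (e : 'I_4 -> quat) : quat :=
  \big[qadd/qzero]_(i < 4) qscale (c i) (e i).

Definition gross_lattice (O : quat -> Prop) (beta : quat) : Prop :=
  exists x, O x /\ beta = qsub (qscale 2 x) (qrat (qtrace x)).

Section Alg.
Variables (a b : int).
Let A : rat := a%:~R.
Let B : rat := b%:~R.

Definition qmul (x y : quat) :=
  Quat (q0 x * q0 y + A * q1 x * q1 y + B * q2 x * q2 y - A * B * q3 x * q3 y)
       (q0 x * q1 y + q1 x * q0 y - B * q2 x * q3 y + B * q3 x * q2 y)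
       (q0 x * q2 y + q2 x * q0 y + A * q1 x * q3 y - A * q3 x * q1 y)
       (q0 x * q3 y + q3 x * q0 y + q1 x * q2 y - q2 x * q1 y).

Definition qnorm (x : quat) : rat := q0 (qmul x (qconj x)).

Definition is_order (O : quat -> Prop) : Prop :=
  (exists e : 'I_4 -> quat,
      (forall c : 'I_4 -> rat, qlincomb c e = qzero -> forall i, c i = 0) /\
      (forall x, O x <-> exists z : 'I_4 -> int,
                    x = qlincomb (fun i => (z i)%:~R) e)) /\
  O qone /\ (forall x y, O x -> O y -> O (qmul x y)).

End Alg.

Definition qlin_indep2 (x y : quat) : Prop :=
  forall c d : rat, qadd (qscale c x) (qscale d y) = qzero -> c = 0 /\ d = 0.

(* Ramification of (a,b)_Q at a finite prime l: the norm form
   x0^2 - a x1^2 - b x2^2 + ab x3^2 is anisotropic over Q_l, i.e.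
   (by compactness of primitive vectors in Z_l^4) for some k there is no
   primitive integer vector on which the form vanishes mod l^k. *)
Definition normform_int (a b x0 x1 x2 x3 : int) : int :=
  x0 ^+ 2 - a * x1 ^+ 2 - b * x2 ^+ 2 + a * b * x3 ^+ 2.

Definition ramified_at (a b : int) (l : nat) : Prop :=
  exists k : nat, forall x0 x1 x2 x3 : int,
    ~~ [&& (l%:Z %| x0)%Z, (l%:Z %| x1)%Z, (l%:Z %| x2)%Z & (l%:Z %| x3)%Z] ->
    ~~ ((l ^ k)%N%:Z %| normform_int a b x0 x1 x2 x3)%Z.

(* (a,b)_Q is ramified at infinity (definite: a < 0 and b < 0) and at
   exactly the finite prime p: it is a model of B_p. *)
Definition is_Bp_model (p : nat) (a b : int) : Prop :=
  a < 0 /\ b < 0 /\ (forall l : nat, prime l -> (ramified_at a b l <-> l = p)).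

Definition sq_cong_mod (p s : nat) (r : rat) : Prop :=
  exists k : int, (s ^ 2)%N%:R - r = p%:R * k%:~R.

From HB Require Import structures.
From mathcomp Require Import all_boot all_order all_algebra.
From mathcomp Require Import zify ring lra.
Set Implicit Arguments. Unset Strict Implicit. Unset Printing Implicit Defensive.
Import Order.TTheory GRing.Theory Num.Theory.
Local Open Scope ring_scope.

(* Norms and traces
   of elements of an order are integers, so n = N(beta1), m = N(beta2) and
   s = Tr(beta1 conj beta2) / 2 are integers with 4 | nm - s^2, which settles p = 2.
   For odd p, p | nm - s^2 as well: otherwise the binary form n x^2 + 2sxy + m y^2
   represents -1 mod p, and Hensel's lemma makes X^2 + n x^2 + 2sxy + m y^2
   divisible by any power of p with p not dividing X; then X + x beta1 + y beta2
   has norm of arbitrarily large p-adic valuation while X is a p-adic unit,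
   contradicting ramification of B_p at p. Minimality of beta2 gives
   2|s| <= n <= p, and a square root of nm mod p that is at most p/2 is the least
   one, so t = |s|. *)

(** * Quadratic forms modulo p *)

Lemma ndvdz_of_dvdz_sub1 (d : nat) (X : int) : (1 < d)%N -> (d %| X - 1)%Z -> ~~ (d %| X)%Z.
Proof.
move=> d_gt1 dX1; apply: contraTN d_gt1 => dX.
by have := rpredB dX dX1; rewrite opprB addrC subrK dvdzE /= dvdn1 => /eqP ->.
Qed.

Section OddPrime.
Variable p : nat.
Hypotheses (p_pr : prime p) (p_odd : odd p).

Lemma Fp_two_neq0 : (2%:R : 'F_p) != 0.
Proof.
rewrite -(dvdn_pcharf (pchar_Fp p_pr)) dvdn_prime2 //.
by apply: contraTneq p_odd => ->.
Qed.

Lemma Fp_sqr_inj_half (u v : nat) : (u < p.+1./2)%N -> (v < p.+1./2)%N ->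
  (u%:R : 'F_p) ^+ 2 = v%:R ^+ 2 -> u = v.
Proof.
move=> u_lt v_lt /eqP; rewrite -subr_eq0 subr_sqr mulf_eq0 subr_eq0 -natrD.
rewrite -(dvdn_pcharf (pchar_Fp p_pr)).
have p_half : (2 * p.+1./2)%N = p.+1 by rewrite mul2n -[RHS]odd_double_half oddS p_odd.
case/orP=> [/eqP /(congr1 val) | uv_dvd].
  by rewrite /= !val_Fp_nat // !modn_small //; lia.
have [uv0|uv_gt0] := posnP (u + v); first lia.
have := dvdn_leq uv_gt0 uv_dvd; lia.
Qed.

Lemma Fp_diag_form_universal (d c : 'F_p) : d != 0 ->
  exists u y : 'F_p, u ^+ 2 + d * y ^+ 2 = c.
Proof.
move=> d_neq0; pose h := p.+1./2.
pose sq (u : 'I_h) := ((u : nat)%:R : 'F_p) ^+ 2.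
pose csq (u : 'I_h) := c - d * ((u : nat)%:R : 'F_p) ^+ 2.
have sq_inj : injective sq.
  by move=> u v /Fp_sqr_inj_half uv; apply/val_inj/uv.
have csq_inj : injective csq.
  move=> u v /addrI /oppr_inj /(mulfI d_neq0) /Fp_sqr_inj_half uv.
  exact/val_inj/uv.
have h2 : (2 * h)%N = p.+1 by rewrite mul2n -[RHS]odd_double_half oddS p_odd.
(* Two sets of (p + 1) / 2 elements each in a field of p elements must meet. *)
have : [set sq u | u in 'I_h] :&: [set csq u | u in 'I_h] != set0.
  rewrite -card_gt0; have := cardsUI [set sq u | u in 'I_h] [set csq u | u in 'I_h].
  rewrite !card_imset // card_ord.
  have := max_card ([set sq u | u in 'I_h] :|: [set csq u | u in 'I_h]).
  rewrite card_Fp //; lia.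
case/set0Pn => z /setIP [/imsetP [u _ ->] /imsetP [y _ e]].
by exists u%:R, y%:R; rewrite /sq in e; rewrite e /csq subrK.
Qed.

Lemma Fp_binary_form_universal (n s m c : 'F_p) : n * m - s ^+ 2 != 0 ->
  exists x y : 'F_p, n * x ^+ 2 + 2%:R * s * x * y + m * y ^+ 2 = c.
Proof.
have nondeg n' m' : n' != 0 -> n' * m' - s ^+ 2 != 0 ->
    exists x y : 'F_p, n' * x ^+ 2 + 2%:R * s * x * y + m' * y ^+ 2 = c.
  move=> n_neq0 D_neq0; have [u [y e]] := Fp_diag_form_universal (n' * c) D_neq0.
  (* complete the square: n Q(x, y) = (n x + s y)^2 + (n m - s^2) y^2 *)
  exists ((u - s * y) / n'), y; apply: (mulfI n_neq0); rewrite -e; field.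
  exact: n_neq0.
move=> D_neq0; have [n0|n_neq0] := eqVneq n 0; last exact: nondeg.
have [m0|m_neq0] := eqVneq m 0; last first.
  have [|x [y e]] := nondeg m n m_neq0; first by rewrite mulrC.
  by exists y, x; rewrite -e; ring.
have s_neq0 : s != 0 by apply: contraNneq D_neq0 => ->; rewrite n0 m0 mul0r expr0n /= subr0.
exists 1, (c / (2%:R * s)); rewrite n0 m0; field.
by rewrite s_neq0 Fp_two_neq0.
Qed.

Lemma Fp_intr_lift (x : 'F_p) : exists z : int, x = z%:~R.
Proof. by exists (val x); rewrite -pmulrn natr_Zp. Qed.

Lemma binary_form_universal_mod (n s m c : int) : ~~ (p %| n * m - s ^+ 2)%Z ->
  exists x y : int, (p %| n * x ^+ 2 + 2 * s * x * y + m * y ^+ 2 - c)%Z.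
Proof.
have chF := pchar_Fp p_pr.
rewrite (dvdz_pcharf chF) rmorphB rmorphM rmorphXn /= => D_neq0.
have [x [y e]] := Fp_binary_form_universal c%:~R D_neq0.
have [[X eX] [Y eY]] := (Fp_intr_lift x, Fp_intr_lift y).
exists X, Y; rewrite (dvdz_pcharf chF) !(rmorphB, rmorphD, rmorphM, rmorphXn) /=.
by rewrite -e eX eY subrr.
Qed.

Lemma hensel_sqrt (c : int) : (p %| c - 1)%Z ->
  forall K : nat, exists X : int, (p %| X - 1)%Z /\ ((p ^ K.+1)%N %| X ^+ 2 - c)%Z.
Proof.
move=> c1; elim=> [|K [X [X1 XK]]].
  by exists 1; rewrite subrr dvdz0 expn1 expr1n -opprB rpredN.
have p_ndvd_X := ndvdz_of_dvdz_sub1 (prime_gt1 p_pr) X1.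
have cop : coprimez (2 * X) p.
  have X_nd : ~~ (p %| `|X|)%N by move: p_ndvd_X; rewrite dvdzE.
  rewrite coprimezE coprime_sym prime_coprime // abszM Euclid_dvdM //.
  rewrite (negPf X_nd) orbF dvdn_prime2 //.
  by apply: contraTneq p_odd => /= ->.
have [[u v] /= uv] := coprimezP _ _ cop.
have [r er] := dvdzP XK; have [w ew] := dvdzP X1.
(* Newton step: X' = X - r p^(K+1) / (2 X), with 1 / (2 X) replaced by u mod p *)
exists (X - r * u * (p ^ K.+1)%N); split.
  apply/dvdzP; exists (w - r * u * (p ^ K)%N).
  by rewrite expnS PoszM -[X](subrK 1) ew; ring.
apply/dvdzP; exists (r * v + r ^+ 2 * u ^+ 2 * (p ^ K)%N).
move: er uv; rewrite !expnS !PoszM; set P := Posz (p ^ K)%N => er uv.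
apply/eqP; rewrite -subr_eq0; apply/eqP.
transitivity ((X ^+ 2 - c - r * (p%:Z * P)) - r * p%:Z * P * (u * (2 * X) + v * p%:Z - 1)).
  by ring.
by rewrite er uv !subrr mulr0 subrr.
Qed.

Lemma ternary_form_isotropic_mod (n s m : int) : ~~ (p %| n * m - s ^+ 2)%Z ->
  forall K : nat, exists X x y : int,
    ~~ (p %| X)%Z /\ ((p ^ K)%N %| X ^+ 2 + (n * x ^+ 2 + 2 * s * x * y + m * y ^+ 2))%Z.
Proof.
move=> D_ndvd K; have [x [y]] := binary_form_universal_mod (-1) D_ndvd.
set q := (X in (_ %| X - _)%Z) => q_m1.
have [|X [X1 XK]] := hensel_sqrt (c := - q) _ K.
  by move: q_m1; rewrite opprK -opprD rpredN.
exists X, x, y; split; first exact: ndvdz_of_dvdz_sub1 (prime_gt1 p_pr) X1.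
by rewrite -/q -[q]opprK (dvdz_trans _ XK) // expnS PoszM dvdz_mull.
Qed.

End OddPrime.

Lemma sqr_congr_least (p t s : nat) : prime p -> (2 * t <= p)%N ->
  (p %| s%:Z ^+ 2 - t%:Z ^+ 2)%Z -> (t <= s)%N.
Proof.
move=> p_pr t_le; rewrite subr_sqr dvdzE abszM Euclid_dvdM //.
rewrite leqNgt; apply: contraL => s_lt.
by rewrite negb_or !gtnNdvd //; lia.
Qed.

Lemma sq_cong_modE (p s : nat) (r : int) : sq_cong_mod p s r%:~R <-> (p %| s%:Z ^+ 2 - r)%Z.
Proof.
have cast (k : int) : (s ^ 2)%N%:R - r%:~R = p%:R * k%:~R :> rat <-> s%:Z ^+ 2 - r = k * p.
  rewrite -[(s ^ 2)%N%:R]/((s%:Z ^+ 2)%:~R) -[p%:R]/(p%:Z%:~R) -rmorphB -intrM mulrC.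
  by split => [/intr_inj | ->].
split => [[k /cast sk] | /dvdzP [k /cast sk]]; last by exists k.
by apply/dvdzP; exists k.
Qed.

(** * Integrality in orders *)

Lemma rat_int_of_double (t : rat) (z : int) : 2 * t = z%:~R -> (2 %| z ^+ 2)%Z ->
  exists w : int, t = w%:~R.
Proof.
move=> tz; rewrite dvdzE abszX Euclid_dvdX // andbT => z_even.
have /dvdzP [w zw] : (2 %| z)%Z by rewrite dvdzE.
by exists w; apply: (mulfI (_ : (2 : rat) != 0)) => //; rewrite tz zw intrM mulrC.
Qed.

Lemma mxtrace_similar_int n (E F : 'M[rat]_n) (Z : 'M[int]_n) :
  E \in unitmx -> E *m F = map_mx intr Z *m E -> \tr F = (\tr Z)%:~R.
Proof.
move=> E_unit EF; have -> : F = invmx E *m (map_mx intr Z *m E) by rewrite -EF mulKmx.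
by rewrite mxtrace_mulC -mulmxA mulmxV // mulmx1 trace_map_mx.
Qed.

Definition qvec (x : quat) : 'rV[rat]_4 :=
  \row_(j < 4) [:: q0 x; q1 x; q2 x; q3 x]`_j.

Lemma qvec_inj : injective qvec.
Proof.
move=> [x0 x1 x2 x3] [y0 y1 y2 y3] /rowP xy.
have := xy 0; have := xy 1; have := xy 2%:R; have := xy 3%:R.
by rewrite !mxE /= => -> -> -> ->.
Qed.

Lemma qvec_add x y : qvec (qadd x y) = qvec x + qvec y.
Proof. by apply/rowP => -[[|[|[|[|?]]]] ?]; rewrite !mxE. Qed.

Lemma qvec_zero : qvec qzero = 0.
Proof. by apply/rowP => -[[|[|[|[|?]]]] ?]; rewrite !mxE. Qed.

Lemma qvec_scale c x : qvec (qscale c x) = c *: qvec x.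
Proof. by apply/rowP => -[[|[|[|[|?]]]] ?]; rewrite !mxE. Qed.

Definition basis_mx (e : 'I_4 -> quat) : 'M[rat]_4 := \matrix_i qvec (e i).

Lemma qvec_lincomb c e : qvec (qlincomb c e) = \row_i c i *m basis_mx e.
Proof.
rewrite /qlincomb (big_morph qvec qvec_add qvec_zero).
apply/rowP => j; rewrite summxE !mxE; apply: eq_bigr => i _.
by rewrite qvec_scale !mxE.
Qed.

Lemma row_basis_mx e i : row i (basis_mx e) = qvec (e i).
Proof. by apply/rowP => j; rewrite !mxE. Qed.

Lemma basis_mx_unit (e : 'I_4 -> quat) :
  (forall c, qlincomb c e = qzero -> forall i, c i = 0) -> basis_mx e \in unitmx.
Proof.
move=> e_free; rewrite unitmxE unitfE; apply/negP => /det0P [v /eqP v_neq0 ve].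
apply: v_neq0; apply/rowP => i; rewrite mxE; apply: (e_free (v 0)).
apply: qvec_inj; rewrite qvec_lincomb qvec_zero -ve; congr (_ *m _).
by apply/rowP => j; rewrite mxE.
Qed.

Definition qbasis (i : 'I_4) : quat :=
  Quat (i == 0 :> nat)%:R (i == 1 :> nat)%:R (i == 2 :> nat)%:R (i == 3 :> nat)%:R.

Definition qmx (f : quat -> quat) : 'M[rat]_4 := \matrix_i qvec (f (qbasis i)).

Section Quaternion.
Variables a b : int.

Definition qsandwich (x v : quat) := qmul a b (qmul a b x v) x.

Lemma qvec_qmul x v : qvec (qmul a b x v) = qvec v *m qmx (qmul a b x).
Proof.
case: x v => [x0 x1 x2 x3] [v0 v1 v2 v3].
apply/rowP => j; rewrite !mxE !big_ord_recr big_ord0 /= !mxE /=.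
by case: j => [[|[|[|[|?]]]] ?] //=; ring.
Qed.

Lemma qvec_qsandwich x v : qvec (qsandwich x v) = qvec v *m qmx (qsandwich x).
Proof.
case: x v => [x0 x1 x2 x3] [v0 v1 v2 v3].
apply/rowP => j; rewrite !mxE !big_ord_recr big_ord0 /= !mxE /=.
by case: j => [[|[|[|[|?]]]] ?] //=; ring.
Qed.

Lemma mxtrace_qmul x : \tr (qmx (qmul a b x)) = 2 * qtrace x.
Proof.
by case: x => x0 x1 x2 x3; rewrite /mxtrace !big_ord_recr big_ord0 /= !mxE /= /qtrace /=; ring.
Qed.

Lemma mxtrace_qsandwich x : \tr (qmx (qsandwich x)) = qtrace x ^+ 2.
Proof.
by case: x => x0 x1 x2 x3; rewrite /mxtrace !big_ord_recr big_ord0 /= !mxE /= /qtrace /=; ring.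
Qed.

Section Order.
Variable O : quat -> Prop.
Hypothesis O_order : is_order a b O.

Lemma order_lincomb (m n : int) x y :
  O x -> O y -> O (qadd (qscale m%:~R x) (qscale n%:~R y)).
Proof.
have [[e [_ O_span]] _] := O_order.
move=> /O_span [z ->] /O_span [w ->]; apply/O_span; exists (fun i => m * z i + n * w i).
apply: qvec_inj; rewrite qvec_add !qvec_scale !qvec_lincomb !scalemxAl -mulmxDl.
by congr (_ *m _); apply/rowP => j; rewrite !mxE intrD !intrM.
Qed.

Lemma order_stable_mxtrace_int (f : quat -> quat) (F : 'M[rat]_4) :
  (forall v, qvec (f v) = qvec v *m F) -> (forall v, O v -> O (f v)) ->
  exists z : int, \tr F = z%:~R.
Proof.
have [[e [e_free O_span]] _] := O_order; move=> fF O_f.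
have O_e i : O (e i).
  apply/O_span; exists (fun j => (j == i)%:Z); apply: qvec_inj.
  rewrite qvec_lincomb -row_basis_mx rowE; congr (_ *m _).
  by apply/rowP => j; rewrite !mxE eq_sym; case: (i == j).
have /fin_all_exists [Z eZ] i : exists z : 'I_4 -> int, f (e i) = qlincomb (fun j => (z j)%:~R) e.
  exact/O_span/O_f.
exists (\tr (\matrix_(i, j) Z i j)); apply: mxtrace_similar_int (basis_mx_unit e_free) _.
apply/row_matrixP => i; rewrite !row_mul row_basis_mx -fF eZ qvec_lincomb.
by congr (_ *m _); apply/rowP => j; rewrite !mxE.
Qed.

Lemma order_qtrace_int x : O x -> exists z : int, qtrace x = z%:~R.
Proof.
have [_ [_ O_mul]] := O_order; move=> Ox.
(* Left multiplication by x has trace 2 Tr x and v |-> x v x has trace (Tr x)^2;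
   both maps preserve O, so both traces are integers. *)
have [z1 e1] := order_stable_mxtrace_int (qvec_qmul x) (fun v Ov => O_mul _ _ Ox Ov).
have [z2 e2] := order_stable_mxtrace_int (qvec_qsandwich x)
  (fun v Ov => O_mul _ _ (O_mul _ _ Ox Ov) Ox).
rewrite mxtrace_qmul in e1; rewrite mxtrace_qsandwich in e2.
apply: (rat_int_of_double e1); apply/dvdzP; exists (2 * z2).
by apply: (@intr_inj rat); rewrite rmorphXn /= -e1 !intrM -e2; ring.
Qed.

Lemma order_qrat_int r : O (qrat r) -> exists z : int, r = z%:~R.
Proof.
have [_ [_ O_mul]] := O_order; move=> Or.
have [z1 e1] := order_qtrace_int Or.
have [z2 e2] := order_qtrace_int (O_mul _ _ Or Or).
rewrite /qtrace /= in e1 e2.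
apply: (rat_int_of_double (_ : 2 * r = z1%:~R)); first by rewrite -e1; ring.
apply/dvdzP; exists z2.
by apply: (@intr_inj rat); rewrite rmorphXn /= -e1 !intrM -e2; ring.
Qed.

Lemma order_qconj x : O x -> O (qconj x).
Proof.
have [_ [O1 _]] := O_order; move=> Ox; have [t et] := order_qtrace_int Ox.
have -> : qconj x = qadd (qscale t%:~R qone) (qscale (-1)%:~R x).
  case: x {Ox} et => x0 x1 x2 x3; rewrite /qtrace /= => <-.
  by rewrite rmorphN1; congr Quat; rewrite /=; ring.
exact: order_lincomb.
Qed.

Lemma order_qnorm_int x : O x -> exists z : int, qnorm a b x = z%:~R.
Proof.
have [_ [_ O_mul]] := O_order; move=> Ox; apply: order_qrat_int.
have -> : qrat (qnorm a b x) = qmul a b x (qconj x).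
  by case: x {Ox} => x0 x1 x2 x3; congr Quat; rewrite /qnorm /=; ring.
exact/O_mul/order_qconj.
Qed.

End Order.

Definition gross (x : quat) := qsub (qscale 2 x) (qrat (qtrace x)).

Lemma gross_pure x : q0 (gross x) = 0.
Proof. by case: x => *; rewrite /= /qtrace /=; ring. Qed.

Lemma qnorm_gross x : qnorm a b (gross x) = 4 * qnorm a b x - qtrace x ^+ 2.
Proof. by case: x => *; rewrite /qnorm /gross /qtrace /=; ring. Qed.

Lemma qtrace_gross x y : qtrace (qmul a b (gross x) (qconj (gross y))) =
  2 * (qtrace x * qtrace y - 2 * qtrace (qmul a b x y)).
Proof. by case: x => *; case: y => *; rewrite /gross /qtrace /=; ring. Qed.

Lemma qnorm_qscale c x : qnorm a b (qscale c x) = c ^+ 2 * qnorm a b x.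
Proof. by case: x => *; rewrite /qnorm /=; ring. Qed.


Lemma qnorm_shift u v c : qnorm a b (qadd v (qscale c u)) =
  qnorm a b v + c * qtrace (qmul a b u (qconj v)) + c ^+ 2 * qnorm a b u.
Proof. by case: u => *; case: v => *; rewrite /qnorm /qtrace /=; ring. Qed.

Lemma qnorm_pure_comb u v X x y : q0 u = 0 -> q0 v = 0 ->
  qnorm a b (qadd (qrat X) (qadd (qscale x u) (qscale y v))) =
  X ^+ 2 + x ^+ 2 * qnorm a b u + x * y * qtrace (qmul a b u (qconj v)) + y ^+ 2 * qnorm a b v.
Proof.
case: u => u0 ? ? ? /= ->; case: v => v0 ? ? ? /= ->.
by rewrite /qnorm /qtrace /=; ring.
Qed.

Lemma qnorm_min_shift u v :
  (forall c : int, qnorm a b v <= qnorm a b (qadd v (qscale c%:~R u))) ->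
  `|qtrace (qmul a b u (qconj v))| <= qnorm a b u.
Proof.
move=> v_min; have := v_min 1; have := v_min (-1).
rewrite !qnorm_shift rmorphN1 rmorph1; set t := qtrace _ => le_m1 le_1.
by rewrite ler_norml; apply/andP; split; lra.
Qed.

End Quaternion.

(** * Ramification *)

Lemma pfactor_sqr_cancel (p k g N : nat) : prime p -> (0 < g)%N ->
  (p ^ (k + 2 * logn p g) %| g ^ 2 * N)%N -> (p ^ k %| N)%N.
Proof.
move=> p_pr g_gt0; have [->|N_gt0] := posnP N; first by rewrite dvdn0.
rewrite !pfactor_dvdn ?muln_gt0 ?expn_gt0 ?g_gt0 // lognM ?expn_gt0 ?g_gt0 //.
by rewrite lognX; lia.
Qed.

Lemma normform_intZ (a b g d0 d1 d2 d3 : int) :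
  normform_int a b (d0 * g) (d1 * g) (d2 * g) (d3 * g) = g ^+ 2 * normform_int a b d0 d1 d2 d3.
Proof. by rewrite /normform_int; ring. Qed.

Lemma normform_primitive_dvd (p k : nat) (a b c0 c1 c2 c3 : int) : prime p -> c0 != 0 ->
  ((p ^ (k + 2 * logn p `|c0|))%N %| normform_int a b c0 c1 c2 c3)%Z ->
  exists d0 d1 d2 d3 : int,
    ~~ [&& (p %| d0)%Z, (p %| d1)%Z, (p %| d2)%Z & (p %| d3)%Z] /\
    ((p ^ k)%N %| normform_int a b d0 d1 d2 d3)%Z.
Proof.
move=> p_pr c0_neq0 nf_dvd.
pose g := gcdz (gcdz c0 c1) (gcdz c2 c3).
have g_max d : (d %| c0)%Z -> (d %| c1)%Z -> (d %| c2)%Z -> (d %| c3)%Z -> (d %| g)%Z.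
  by move=> h0 h1 h2 h3; rewrite !dvdz_gcd h0 h1 h2 h3.
have g_dvd_c0 : (g %| c0)%Z by rewrite (dvdz_trans (dvdz_gcdl _ _)) ?dvdz_gcdl.
have g_dvd_c1 : (g %| c1)%Z by rewrite (dvdz_trans (dvdz_gcdl _ _)) ?dvdz_gcdr.
have g_dvd_c2 : (g %| c2)%Z by rewrite (dvdz_trans (dvdz_gcdr _ _)) ?dvdz_gcdl.
have g_dvd_c3 : (g %| c3)%Z by rewrite (dvdz_trans (dvdz_gcdr _ _)) ?dvdz_gcdr.
clearbody g; move: g_dvd_c0 g_dvd_c1 g_dvd_c2 g_dvd_c3 => /dvdzP [d0 e0] /dvdzP [d1 e1].
move=> /dvdzP [d2 e2] /dvdzP [d3 e3]; subst c0 c1 c2 c3.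
have g_gt0 : (0 < `|g|)%N by rewrite absz_gt0; apply: contraNneq c0_neq0 => ->; rewrite mulr0.
exists d0, d1, d2, d3; split.
  apply/negP => /and4P [p_d0 p_d1 p_d2 p_d3].
  have : (p%:Z * g %| g)%Z by apply: g_max; rewrite dvdz_mul2r -?absz_gt0.
  rewrite dvdzE abszM => /(dvdn_leq g_gt0).
  by rewrite leqNgt ltn_Pmull ?prime_gt1.
move: nf_dvd; rewrite normform_intZ !dvdzE !abszM /= => nf_dvd.
apply: pfactor_sqr_cancel p_pr g_gt0 (dvdn_trans _ nf_dvd).
rewrite dvdn_exp2l // leq_add2l leq_mul2l /= dvdn_leq_log ?dvdn_mull //.
by rewrite -abszM absz_gt0.
Qed.

Definition qint (c0 c1 c2 c3 : int) := Quat c0%:~R c1%:~R c2%:~R c3%:~R.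

Definition qintegral (w : quat) := exists c0 c1 c2 c3 : int, w = qint c0 c1 c2 c3.

Lemma qintegral_lincomb (X m n : int) u v : qintegral u -> qintegral v ->
  qintegral (qadd (qrat X%:~R) (qadd (qscale m%:~R u) (qscale n%:~R v))).
Proof.
move=> [u0 [u1 [u2 [u3 ->]]]] [v0 [v1 [v2 [v3 ->]]]].
exists (X + (m * u0 + n * v0)), (m * u1 + n * v1), (m * u2 + n * v2), (m * u3 + n * v3).
by rewrite /qint; congr Quat; rewrite /= !(intrD, intrM) ?add0r.
Qed.

Lemma denq_dvd_mulr (M : int) (r : rat) : (denq r %| M)%Z -> exists z : int, M%:~R * r = z%:~R.
Proof.
move=> /dvdzP [k ->]; exists (k * numq r).
by rewrite !intrM -mulrA [_ * r]mulrC numqE.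
Qed.

Lemma qintegral_denom (x : quat) : exists M : int, 0 < M /\ qintegral (qscale M%:~R x).
Proof.
case: x => x0 x1 x2 x3; pose M := denq x0 * denq x1 * denq x2 * denq x3.
have [z0 e0] : exists z : int, M%:~R * x0 = z%:~R by apply: denq_dvd_mulr; rewrite !dvdz_mulr.
have [z1 e1] : exists z : int, M%:~R * x1 = z%:~R.
  by apply: denq_dvd_mulr; rewrite dvdz_mulr // dvdz_mulr // dvdz_mull.
have [z2 e2] : exists z : int, M%:~R * x2 = z%:~R.
  by apply: denq_dvd_mulr; rewrite dvdz_mulr // dvdz_mull.
have [z3 e3] : exists z : int, M%:~R * x3 = z%:~R by apply: denq_dvd_mulr; rewrite dvdz_mull.
exists M; split; first by rewrite !mulr_gt0 ?denq_gt0.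
by exists z0, z1, z2, z3; rewrite /qscale /= e0 e1 e2 e3.
Qed.

Section Ramified.
Variables (a b : int) (p : nat).
Hypotheses (p_pr : prime p) (ram : ramified_at a b p).

Lemma qnorm_qint c0 c1 c2 c3 :
  qnorm a b (qint c0 c1 c2 c3) = (normform_int a b c0 c1 c2 c3)%:~R.
Proof. by rewrite /qnorm /normform_int /= !(intrD, intrM, intrN, rmorphXn); ring. Qed.

Lemma ramified_qnorm_bound : exists k : nat, forall (w : quat) (c0 W : int),
  qintegral w -> q0 w = c0%:~R -> c0 != 0 ->
  qnorm a b w != ((p ^ (k + 2 * logn p `|c0|))%N%:Z * W)%:~R.
Proof.
have [k k_prim] := ram; exists k => w c0 W [d0 [c1 [c2 [c3 ->]]]] /= /intr_inj -> c0_neq0.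
apply/eqP; rewrite qnorm_qint => /intr_inj nf_eq.
have [|d [d1 [d2 [d3 [d_prim d_dvd]]]]] :=
    @normform_primitive_dvd p k a b c0 c1 c2 c3 p_pr c0_neq0.
  by rewrite nf_eq dvdz_mulr.
by have := k_prim d d1 d2 d3 d_prim; rewrite d_dvd.
Qed.

Lemma ramified_pure_qnorm_bound u v : q0 u = 0 -> q0 v = 0 ->
  exists K : nat, forall X x y W : int, ~~ (p %| X)%Z ->
    qnorm a b (qadd (qrat X%:~R) (qadd (qscale x%:~R u) (qscale y%:~R v)))
      != ((p ^ K)%N%:Z * W)%:~R.
Proof.
move=> u_pure v_pure; have [k k_bound] := ramified_qnorm_bound.
have [[Mu [Mu_gt0 Mu_int]] [Mv [Mv_gt0 Mv_int]]] := (qintegral_denom u, qintegral_denom v).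
(* Clearing denominators with M = Mu Mv multiplies the norm by M^2 and turns X into
   M X, whose p-adic valuation is that of M because p does not divide X. *)
exists (k + 2 * logn p `|(Mu * Mv)%R|)%N => X x y W X_nd; apply/eqP => norm_eq.
set z := qadd _ _ in norm_eq.
have Mz_int : qintegral (qscale (Mu * Mv)%:~R z).
  have -> : qscale (Mu * Mv)%:~R z = qadd (qrat (Mu * Mv * X)%:~R)
      (qadd (qscale (x * Mv)%:~R (qscale Mu%:~R u)) (qscale (y * Mu)%:~R (qscale Mv%:~R v))).
    by rewrite /z /qscale /qadd /qrat /=; congr Quat; rewrite !intrM; ring.
  exact: qintegral_lincomb.
have X_nd' : ~~ (p %| `|X|)%N by move: X_nd; rewrite dvdzE.
have X_neq0 : X != 0 by apply: contraNneq X_nd' => ->; rewrite dvdn0.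
have M_neq0 : Mu * Mv != 0 by rewrite mulf_neq0 // gt_eqF.
have MX_neq0 : Mu * Mv * X != 0 by rewrite mulf_neq0.
have MX_q0 : q0 (qscale (Mu * Mv)%:~R z) = (Mu * Mv * X)%:~R.
  by rewrite /z /= u_pure v_pure !mulr0 !addr0 [in RHS]intrM.
have logMX : logn p `|Mu * Mv * X| = logn p `|(Mu * Mv)%R|.
  by rewrite abszM lognM ?absz_gt0 // (logn_coprime (m := `|X|)) ?addn0 ?prime_coprime.
move/eqP: (k_bound _ _ ((Mu * Mv) ^+ 2 * W) Mz_int MX_q0 MX_neq0); apply.
by rewrite qnorm_qscale norm_eq logMX -rmorphXn -intrM; congr (_%:~R); ring.
Qed.

Lemma ramified_pure_disc_dvd u v (n m s : int) : odd p -> q0 u = 0 -> q0 v = 0 ->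
  qnorm a b u = n%:~R -> qnorm a b v = m%:~R -> qtrace (qmul a b u (qconj v)) = (2 * s)%:~R ->
  (p %| n * m - s ^+ 2)%Z.
Proof.
move=> p_odd u_pure v_pure en em es; apply: contraT => disc_nd.
have [K K_bound] := ramified_pure_qnorm_bound u_pure v_pure.
have [X [x [y [X_nd /dvdzP [W eW]]]]] := ternary_form_isotropic_mod p_pr p_odd disc_nd K.
have := K_bound X x y W X_nd; rewrite mulrC -eW qnorm_pure_comb // en em es.
by rewrite !(rmorphD, rmorphM, rmorphXn) /= => /eqP[]; ring.
Qed.

End Ramified.

Lemma gross_invariants_int a b O x y : is_order a b O -> O x -> O y ->
  exists n m s : int, [/\ qnorm a b (gross x) = n%:~R, qnorm a b (gross y) = m%:~R,
    qtrace (qmul a b (gross x) (qconj (gross y))) = (2 * s)%:~R & (4 %| n * m - s ^+ 2)%Z].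
Proof.
move=> O_order Ox Oy; have [_ [_ O_mul]] := O_order.
have [[Tx eTx] [Ty eTy]] := (order_qtrace_int O_order Ox, order_qtrace_int O_order Oy).
have [Txy eTxy] := order_qtrace_int O_order (O_mul _ _ Ox Oy).
have [[Nx eNx] [Ny eNy]] := (order_qnorm_int O_order Ox, order_qnorm_int O_order Oy).
exists (4 * Nx - Tx ^+ 2), (4 * Ny - Ty ^+ 2), (Tx * Ty - 2 * Txy); split.
- by rewrite qnorm_gross eNx eTx rmorphB rmorphM rmorphXn.
- by rewrite qnorm_gross eNy eTy rmorphB rmorphM rmorphXn.
- by rewrite qtrace_gross eTx eTy eTxy !(rmorphB, rmorphM).
apply/dvdzP; exists (4 * Nx * Ny - Nx * Ty ^+ 2 - Ny * Tx ^+ 2 + Tx * Ty * Txy - Txy ^+ 2).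
by ring.
Qed.

Unset Implicit Arguments.

Theorem corollary3p14 (p : nat) (a b : int) (O : quat -> Prop)
    (beta1 beta2 : quat) :
  prime p -> is_Bp_model p a b -> is_order a b O ->
  gross_lattice O beta1 -> gross_lattice O beta2 ->
  qlin_indep2 beta1 beta2 ->
  qnorm a b beta1 <= p%:R ->
  (forall n : int,
      qnorm a b beta2 <= qnorm a b (qadd beta2 (qscale n%:~R beta1))) ->
  exists t : nat,
    `| qtrace (qmul a b beta1 (qconj beta2)) / 2 | = t%:R /\
    sq_cong_mod p t (qnorm a b beta1 * qnorm a b beta2) /\
    (forall s : nat,
        sq_cong_mod p s (qnorm a b beta1 * qnorm a b beta2) -> (t <= s)%N).
Proof.
move=> p_pr [_ [_ ram]] O_order [x [Ox ->]] [y [Oy ->]] _ N1_le_p beta2_min.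
rewrite -/(gross x) -/(gross y) in N1_le_p beta2_min *.
have [n [m [s [en em es disc4]]]] := gross_invariants_int O_order Ox Oy.
have disc_p : (p %| n * m - s ^+ 2)%Z.
  have [p2|p_odd] := even_prime p_pr; first by rewrite p2 (dvdz_trans _ disc4).
  exact: (ramified_pure_disc_dvd p_pr ((ram p p_pr).2 erefl) p_odd (gross_pure x)
    (gross_pure y) en em es).
have s_le : (2 * `|s| <= p)%N.
  have := qnorm_min_shift beta2_min; rewrite es en -intr_norm ler_int normrM => tr_le.
  by move: N1_le_p; rewrite en -[p%:R]/((p%:Z)%:~R : rat) ler_int; lia.
exists `|s|%N; rewrite es en em -intrM; split; [|split].
- by rewrite intrM mulrC mulKf // -intr_norm natr_absz.
- by apply/sq_cong_modE; rewrite abszE real_normK ?num_real // -opprB rpredN.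
move=> s' /sq_cong_modE s'_sq; apply: sqr_congr_least p_pr s_le _.
rewrite abszE real_normK ?num_real //.
by rewrite -(subrK (n * m) (s'%:Z ^+ 2)) -addrA rpredD.
Qed.
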